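(* Let $(\mathfrak{A},\mathfrak{A}_0)$ be a *-semisimple CQ*-algebra with unit $I$ as in the context, let $X\in\mathfrak{A}$, and suppose $\alpha\in\mathbb{C}$ is a generalized eigenvalue of $X$. Then $X-\alpha I$ has no generalized left inverse.
   Context: Let $\mathfrak{A}_0$ be a unital C*-algebra with C*-norm $\|\cdot\|_0$ and unit $I$, and $\|\cdot\|$ another norm on $\mathfrak{A}_0$ with $\|A\|\le\|A\|_0$, $\|AB\|\le\|A\|\,\|B\|_0$, $\|A^*\|=\|A\|$. $\mathfrak{A}$ is the $\|\cdot\|$-completion of $\mathfrak{A}_0$, with $XA,AX,X^*$ ($X\in\mathfrak{A},A\in\mathfrak{A}_0$) defined as $\|\cdot\|$-limits of $A_nA$, $AA_n$, $A_n^*$ for $A_n\in\mathfrak{A}_0$, $A_n\to X$. $\mathcal{P}_{\mathfrak{A}_0}(\mathfrak{A})$ is the set of sesquilinear forms $\varphi$ on $\mathfrak{A}\times\mathfrak{A}$ with $\varphi(X,X)\ge0$, $\varphi(XA,B)=\varphi(A,X^*B)$ for $X\in\mathfrak{A}$, $A,B\in\mathfrak{A}_0$, and $|\varphi(X,Y)|\le\gamma\|X\|\|Y\|$ for some $\gamma>0$; $\mathcal{S}_{\mathfrak{A}_0}(\mathfrak{A})$ is the subset with $\gamma\le1$. *-semisimple: for every $X\ne0$ there is $\varphi\in\mathcal{S}_{\mathfrak{A}_0}(\mathfrak{A})$ with $\varphi(X,X)>0$. $Z\in\mathfrak{A}$ has a generalized left inverse if there exists $Y\in\mathfrak{A}$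 with $\varphi(ZA,Y^*B)=\varphi(A,B)$ for all $\varphi\in\mathcal{S}_{\mathfrak{A}_0}(\mathfrak{A})$ and all $A,B\in\mathfrak{A}_0$. A complex number $\alpha$ is a generalized eigenvalue of $X$ if there exist a nonzero $\varphi\in\mathcal{P}_{\mathfrak{A}_0}(\mathfrak{A})$ and $A\in\mathfrak{A}_0$ with $\varphi(A,A)>0$ and $\varphi(XA-\alpha A,B)=0$ for all $B\in\mathfrak{A}_0$. *)

From HB Require Import structures.
From mathcomp Require Import all_boot all_order all_algebra.
From mathcomp Require Import all_classical all_reals all_analysis.
From mathcomp Require Import complex.
Set Implicit Arguments. Unset Strict Implicit. Unset Printing Implicit Defensive.
Import Order.TTheory GRing.Theory Num.Theory.
Import numFieldNormedType.Exports.
Local Open Scope ring_scope.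
Local Open Scope classical_set_scope.

(* A0 : Banach space over C carrying the C*-norm ||.||_0 (its own norm);
   A  : Banach space over C (complete: this is the ||.||-completion);
   j  : the (linear, dense) embedding A0 -> A, the second norm on A0 being
        ||a|| := ||j a||_A. *)
Record CQ_data (R : realType) (A0 A : completeNormedModType R[i]) := CQData {
  mul0 : A0 -> A0 -> A0;
  one0 : A0;
  star0 : A0 -> A0;
  emb : A0 -> A;
  rmul : A -> A0 -> A;
  lmul : A0 -> A -> A;
  starA : A -> A
}.

Section Defs.
Variables (R : realType) (A0 A : completeNormedModType R[i]).
Variable S : CQ_data A0 A.

Local Notation m := (mul0 S).
Local Notation j := (emb S).

Definition is_unital_Cstar_algebra : Prop :=
  (forall a b c, m (m a b) c = m a (m b c)) /\
      (forall a, m (one0 S) a = a /\ m a (one0 S) = a) /\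
      (forall (k : R[i]) a b c, m (k *: a + b) c = k *: m a c + m b c) /\
      (forall (k : R[i]) a b c, m c (k *: a + b) = k *: m c a + m c b) /\
      (forall a b, `|m a b| <= `|a| * `|b|) /\
      (forall (k : R[i]) a b, star0 S (k *: a + b) = (k^*) *: star0 S a + star0 S b) /\
      (forall a, star0 S (star0 S a) = a) /\
      (forall a b, star0 S (m a b) = m (star0 S b) (star0 S a)) /\
      (forall a, `|m (star0 S a) a| = `|a| ^+ 2).

Definition is_CQstar_algebra : Prop :=
  is_unital_Cstar_algebra /\
      (forall (k : R[i]) a b, j (k *: a + b) = k *: j a + j b) /\
      injective j /\
      (forall X (e : R[i]), 0 < e -> exists a, `|X - j a| < e) /\
      (forall a, `|j a| <= `|a|) /\
      (forall a b, `|j (m a b)| <= `|j a| * `|b|) /\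
      (forall a, `|j (star0 S a)| = `|j a|) /\
      (forall (u : nat -> A0) X, (fun n => j (u n)) @ \oo --> X ->
         [/\ forall b, (fun n => j (m (u n) b)) @ \oo --> rmul S X b,
             forall b, (fun n => j (m b (u n))) @ \oo --> lmul S b X &
             (fun n => j (star0 S (u n))) @ \oo --> starA S X]).

Definition sesquilinear (phi : A -> A -> R[i]) : Prop :=
  (forall (k : R[i]) X Y Z, phi (k *: X + Y) Z = k * phi X Z + phi Y Z) /\
  (forall (k : R[i]) X Y Z, phi Z (k *: X + Y) = (k^*) * phi Z X + phi Z Y).

Definition P_A0 (phi : A -> A -> R[i]) : Prop :=
  [/\ sesquilinear phi,
      (forall X, 0 <= phi X X),
      (forall X a b, phi (rmul S X a) (j b) = phi (j a) (rmul S (starA S X) b)) &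
      exists gamma : R[i], 0 < gamma /\
        forall X Y, `|phi X Y| <= gamma * `|X| * `|Y| ].

Definition S_A0 (phi : A -> A -> R[i]) : Prop :=
  [/\ sesquilinear phi,
      (forall X, 0 <= phi X X),
      (forall X a b, phi (rmul S X a) (j b) = phi (j a) (rmul S (starA S X) b)) &
      exists gamma : R[i], [/\ 0 < gamma, gamma <= 1 &
        forall X Y, `|phi X Y| <= gamma * `|X| * `|Y| ] ].

Definition star_semisimple : Prop :=
  forall X : A, X != 0 -> exists phi, S_A0 phi /\ 0 < phi X X.

Definition has_gen_left_inverse (Z : A) : Prop :=
  exists Y : A, forall phi, S_A0 phi ->
    forall a b, phi (rmul S Z a) (rmul S (starA S Y) b) = phi (j a) (j b).

Definition gen_eigenvalue (X : A) (alpha : R[i]) : Prop :=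
  exists phi, [/\ P_A0 phi, phi <> (fun _ _ => 0) &
    exists a, 0 < phi (j a) (j a) /\
      forall b, phi (rmul S X a - alpha *: j a) (j b) = 0].

End Defs.

(** If [phi] and [a] witness that [alpha] is a generalized eigenvalue of [X],
    then [phi ((X - alpha I) a, b) = 0] for [b] in [A0], hence, by density of
    [A0] and boundedness of [phi], for every [b] in [A], in particular for
    [b = Y^* a].  Rescaled into [S_A0], [phi] would turn a generalized left
    inverse [Y] of [X - alpha I] into
    [phi (a, a) = phi ((X - alpha I) a, Y^* a) = 0], contradicting
    [phi (a, a) > 0]. *)
From mathcomp Require Import all_boot all_order all_algebra.
From mathcomp Require Import all_classical all_reals all_analysis.
From mathcomp Require Import complex.
Import Order.TTheory GRing.Theory Num.Theory.
Local Open Scope ring_scope.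
Local Open Scope classical_set_scope.
Import numFieldNormedType.Exports.

Section DenseRange.
Context {R : realType} {T : Type} {V : normedModType R[i]} {j : T -> V}.
Hypothesis j_dense : forall (X : V) (e : R[i]), 0 < e -> exists a, `|X - j a| < e.

Lemma dense_range_seq (X : V) : exists u : nat -> T, (fun n => j (u n)) @ \oo --> X.
Proof.
have /boolp.choice[u u_approx] : forall n : nat, exists a, `|X - j a| < n.+1%:R^-1.
  by move=> n; apply: j_dense; rewrite invr_gt0 ltr0n.
exists u; apply/cvgrPdist_lt => e; rewrite ltcE => /andP[/eqP Im_e Re_e_gt0].
have -> : e = (complex.Re e)%:C%C by case: e Im_e {Re_e_gt0} => x y /= ->.
near=> n; apply: lt_le_trans (u_approx n) _.
rewrite -(rmorph_nat (real_complex R) n.+1) -fmorphV lecR; apply: ltW.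
near: n; exact: (near_infty_natSinv_lt (PosNum Re_e_gt0)).
Unshelve. all: by end_near.
Qed.

Lemma bounded_form_eq0_on_dense_range {phi : V -> V -> R[i]} {gamma : R[i]} {U : V} :
  0 < gamma -> (forall W W', `|phi W W'| <= gamma * `|W| * `|W'|) ->
  (forall W W', phi U (W - W') = phi U W - phi U W') ->
  (forall a, phi U (j a) = 0) -> forall W, phi U W = 0.
Proof.
move=> gamma_gt0 phi_bounded phiB phi_j W; apply/normr0_eq0/eqP.
rewrite eq_le normr_ge0 andbT; apply/ler_addgt0Pr => e e_gt0; rewrite add0r.
have C_gt0 : 0 < gamma * (`|U| + 1) by rewrite mulr_gt0 ?ltr_wpDl.
have [a Wa_small] := j_dense W _ (divr_gt0 e_gt0 C_gt0).
have -> : phi U W = phi U (W - j a) by rewrite phiB phi_j subr0.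
apply: (le_trans (phi_bounded _ _)); rewrite -mulrA.
apply: (@le_trans _ _ (gamma * ((`|U| + 1) * `|W - j a|))).
  by rewrite ler_pM2l // ler_wpM2r ?lerDl.
by rewrite mulrA -ler_pdivlMl // mulrC ltW.
Qed.

End DenseRange.

Lemma sesquilinearBr {R : realType} {A : completeNormedModType R[i]}
    (phi : A -> A -> R[i]) :
  sesquilinear phi -> forall U W W', phi U (W - W') = phi U W - phi U W'.
Proof.
by move=> [_ phi_conj] U W W'; rewrite addrC -scaleN1r phi_conj conjCN1 mulN1r addrC.
Qed.

Lemma P_A0_normalize {R : realType} {A0 A : completeNormedModType R[i]}
    {S : CQ_data A0 A} {phi : A -> A -> R[i]} :
  P_A0 S phi -> exists2 c : R[i], 0 < c & S_A0 S (fun X Y => phi X Y / c).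
Proof.
move=> [[phi_lin phi_conj] phi_pos phi_sym [c [c_gt0 phi_bounded]]].
exists c => //; split.
- by split=> k U V W; rewrite ?phi_lin ?phi_conj mulrDl mulrA.
- by move=> U; apply: divr_ge0 (phi_pos U) (ltW c_gt0).
- by move=> U a b; rewrite phi_sym.
- exists 1; split=> // U V; rewrite normrM normfV ler_pdivrMr ?normr_gt0 ?gt_eqF //.
  by rewrite mul1r (gtr0_norm c_gt0) mulrC mulrA phi_bounded.
Qed.

Section CQAlgebra.
Context {R : realType} {A0 A : completeNormedModType R[i]} {S : CQ_data A0 A}.
Hypothesis HS : is_CQstar_algebra S.
Local Notation j := (emb S).
Local Notation m := (mul0 S).

Lemma emb_dense (X : A) (e : R[i]) : 0 < e -> exists a, `|X - j a| < e.
Proof. by case: HS => _ [_ [_ [dense _]]]; apply: dense. Qed.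

Let emb_linear (k : R[i]) a b : j (k *: a + b) = k *: j a + j b.
Proof. by case: HS => _ []. Qed.

Let mul0_linearl (k : R[i]) a b c : m (k *: a + b) c = k *: m a c + m b c.
Proof. by case: HS => [[_ [_ []]]]. Qed.

Let mul0_1r a : m (one0 S) a = a.
Proof. by case: HS => [[_ [/(_ a)[]]]]. Qed.

Let rmul_cvg {u : nat -> A0} {X : A} b :
  (fun n => j (u n)) @ \oo --> X -> (fun n => j (m (u n) b)) @ \oo --> rmul S X b.
Proof. by case: HS => _ [_ [_ [_ [_ [_ [_ cvg_mul]]]]]] /cvg_mul[]. Qed.

Lemma rmul_emb c a : rmul S (j c) a = j (m c a).
Proof.
exact: cvg_unique (@rmul_cvg (fun=> c) _ a (cvg_cst _)) (cvg_cst _).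
Qed.

Lemma rmul_linear (k : R[i]) X X' a :
  rmul S (k *: X + X') a = k *: rmul S X a + rmul S X' a.
Proof.
have [u u_X] := dense_range_seq emb_dense X.
have [v v_X'] := dense_range_seq emb_dense X'.
have w_cvg : (fun n => j (k *: u n + v n)) @ \oo --> k *: X + X'.
  under eq_fun do rewrite emb_linear.
  exact: cvgD (cvg_comp _ _ u_X (@scaler_continuous _ _ k X)) v_X'.
have lim : (fun n => j (m (k *: u n + v n) a)) @ \oo --> k *: rmul S X a + rmul S X' a.
  under eq_fun do rewrite mul0_linearl emb_linear.
  exact: cvgD (cvg_comp _ _ (rmul_cvg a u_X) (@scaler_continuous _ _ k _)) (rmul_cvg a v_X').
exact: cvg_unique (rmul_cvg a w_cvg) lim.
Qed.

Lemma rmulB_scale_one X (k : R[i]) a :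
  rmul S (X - k *: j (one0 S)) a = rmul S X a - k *: j a.
Proof. by rewrite addrC -scaleNr rmul_linear rmul_emb mul0_1r scaleNr addrC. Qed.

End CQAlgebra.

Theorem proposition4p12 (R : realType) (A0 A : completeNormedModType R[i])
  (S : CQ_data A0 A) :
  is_CQstar_algebra S -> star_semisimple S ->
  forall (X : A) (alpha : R[i]), gen_eigenvalue S X alpha ->
  ~ has_gen_left_inverse S (X - alpha *: emb S (one0 S)).
Proof.
move=> HS _ X alpha [phi [Pphi _ [a [phi_aa_gt0 eigen]]]] [Y left_inv].
have [phi_ses _ _ [g [g_gt0 phi_bounded]]] := Pphi.
have [c c_gt0 S_psi] := P_A0_normalize Pphi.
have phi_Za_eq0 : phi (rmul S (X - alpha *: emb S (one0 S)) a) (rmul S (starA S Y) a) = 0.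
  rewrite (rmulB_scale_one HS).
  apply: (bounded_form_eq0_on_dense_range (emb_dense HS) g_gt0 phi_bounded _ eigen).
  exact: sesquilinearBr phi_ses _.
have := left_inv _ S_psi a a; rewrite phi_Za_eq0 mul0r => /esym/eqP.
by rewrite mulf_eq0 invr_eq0 !gt_eqF.
Qed.
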